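(* Let $T$ be a tournament and $X=(v_1,\dots,v_k)$, $k\ge2$, a list of vertices satisfying the $U$-property. Then $v_k$ has exactly one in-neighbour $w$ in $V(T)\setminus X$; let $X'=(v_1,\dots,v_k,w)$. (i) If $d^-(w)=d^-(v_k)$, then $T[X']$ is a $U$-tournament and $X'$ dominates $T$. (ii) If $d^-(w)=d^-(v_k)+1$, then $X'$ is contained in a set $Y\subseteq V(T)$ such that $T[Y]$ is a $U$-tournament and $Y$ dominates or quasi-dominates $T$. (iii) If $d^-(w)>d^-(v_k)+1$, then $T[X]$ is a $U$-tournament and $X$ $(w,v_k)$-quasi-dominates $T$. In every case, $X$ is contained in a set $Y$ such that $T[Y]$ is a $U$-tournament and $Y$ dominates or quasi-dominates $T$.
   Context: A tournament is a digraph with exactly one arc between each pair of distinct vertices; $d^-(v)$ is the in-degree of $v$ in $T$. A list $(v_1,\dots,v_k)$, $k\ge2$, satisfies the $U$-property if $d^-(v_1)=1$ and for each $i\in\{2,\dots,k\}$, $(v_i,v_{i-1})\in A(T)$ and $d^-(v_i)=i-1$. $U_m$ is the tournament on $\{x_1,\dots,x_m\}$ with arcs $(x_{i+1},x_i)$ for $i\in[m-1]$ and $(x_i,x_j)$ for $1\le i<m$, $i+1<j\le m$; a $U$-tournament is a tournament isomorphic to some $U_m$. A set $Y$ dominates $T$ if $(y,z)\in A(T)$ for all $y\in Y$, $z\in V(T)\setminus Y$. $Y$ $(b,a)$-quasi-dominates $T$ if: $(b,a)\in A(T)$ with $a\in Y$, $b\notin Y$; $(u,v)\in A(T)$ for every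 $(u,v)\in (Y\times(V(T)\setminus Y))\setminus\{(a,b)\}$; $d^-(b)\ge|Y|+1$; and $a$ has an out-neighbour in $Y$. $Y$ quasi-dominates $T$ if it $(b,a)$-quasi-dominates $T$ for some $a,b$. *)

From mathcomp Require Import all_boot.
Set Implicit Arguments. Unset Strict Implicit. Unset Printing Implicit Defensive.

Definition tournament (V : finType) (E : rel V) : Prop :=
  (forall x, ~~ E x x) /\ (forall x y, x != y -> E x y = ~~ E y x).

Definition indeg (V : finType) (E : rel V) (v : V) : nat := #|[set u | E u v]|.

(* U-property of the list (v_1, ..., v_k) = v1 :: vs (0-based index j <-> v_{j+1}) *)
Definition Uprop (V : finType) (E : rel V) (v1 : V) (vs : seq V) : Prop :=
  let X := v1 :: vs in
  2 <= size X /\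
  indeg E v1 = 1 /\
  (forall j, 1 <= j < size X ->
     E (nth v1 X j) (nth v1 X j.-1) /\ indeg E (nth v1 X j) = j).

(* T[Y] is a U-tournament: T[Y] is isomorphic to U_m (m = |Y|), i.e. Y can be
   enumerated as x_1,...,x_m (0-based here) so that for distinct i,j the arc
   (x_i,x_j) is present iff i = j+1 or i+1 < j. *)
Definition isUtour (V : finType) (E : rel V) (Y : {set V}) : Prop :=
  exists s : seq V, exists x0 : V,
    uniq s /\ [set x in s] = Y /\
    (forall i j, i < size s -> j < size s ->
       E (nth x0 s i) (nth x0 s j) = (i == j.+1) || (i.+1 < j)).

Definition dominates (V : finType) (E : rel V) (Y : {set V}) : Prop :=
  forall y z, y \in Y -> z \notin Y -> E y z.

Definition quasi_dom_ba (V : finType) (E : rel V) (Y : {set V}) (b a : V) : Prop :=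
  E b a /\ a \in Y /\ b \notin Y /\
  (forall u v, u \in Y -> v \notin Y -> (u, v) != (a, b) -> E u v) /\
  #|Y| + 1 <= indeg E b /\
  (exists c, c \in Y /\ E a c).

Definition quasi_dom (V : finType) (E : rel V) (Y : {set V}) : Prop :=
  exists b a, quasi_dom_ba E Y b a.

From mathcomp Require Import all_boot zify.
Set Implicit Arguments. Unset Strict Implicit. Unset Printing Implicit Defensive.

(* Write X = (x_0, ..., x_n) (0-based). By strong induction along X, the
   U-property pins down in-neighbourhoods: N^-(x_i) = {x_(i+1)} u {x_0, ..., x_(i-2)}
   for i < n, because this set lies in N^-(x_i) and already has d^-(x_i)
   elements. For x_n the set {x_0, ..., x_(n-2)} misses exactly one in-neighbour w,
   which lies outside X. Hence rcons X w spans a U-tournament and every vertex of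
   X beats every vertex outside except for the arc (w, x_n). Finally
   d^-(w) >= n: if d^-(w) = n then rcons X w dominates, if d^-(w) = n + 1 then
   rcons X w again has the U-property and we recurse on a longer list, and if
   d^-(w) > n + 1 then X (w, x_n)-quasi-dominates. *)

Lemma mem_take_nth_uniq (T : eqType) (x0 : T) (s : seq T) m i :
  uniq s -> i < size s -> (nth x0 s i \in take m s) = (i < m).
Proof. by move=> s_uniq lt_is; rewrite in_take ?mem_nth // index_uniq. Qed.

Lemma card_take_uniq (T : finType) (s : seq T) m :
  uniq s -> m <= size s -> #|[set u in take m s]| = m.
Proof.
move=> s_uniq le_ms; rewrite cardsE.
by move/card_uniqP: (take_uniq m s_uniq) => ->; rewrite size_takel.
Qed.

Section Tournament.
Variables (V : finType) (E : rel V).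

Lemma in_nbhd_eq_subset v (S : {set V}) :
  S \subset [set u | E u v] -> indeg E v <= #|S| -> [set u | E u v] = S.
Proof. by move=> sub le_card; apply/esym/eqP; rewrite eqEcard sub. Qed.

Hypothesis hT : tournament E.

Lemma tour_irr a : ~~ E a a. Proof. exact: hT.1. Qed.

Lemma tour_neq a b : E a b -> a != b.
Proof. by apply: contraTneq => ->; apply: tour_irr. Qed.

Lemma tour_asym a b : E a b -> ~~ E b a.
Proof. by move=> Eab; rewrite -(hT.2 _ _ (tour_neq Eab)). Qed.

Lemma tour_total a b : a != b -> ~~ E b a -> E a b.
Proof. by move=> neq_ab; rewrite (hT.2 _ _ neq_ab). Qed.

Section UList.
Variables (v1 : V) (vs : seq V).
Hypothesis hU : Uprop E v1 vs.

Local Notation X := (v1 :: vs).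
Local Notation n := (size vs).
Local Notation x i := (nth v1 X i).

Lemma size_U_gt0 : 0 < n. Proof. by have := hU.1. Qed.

Lemma arc_U i : 0 < i <= n -> E (x i) (x i.-1).
Proof. by move=> le_in; apply: (hU.2.2 i le_in).1. Qed.

Lemma indeg_U i : i <= n -> indeg E (x i) = maxn 1 i.
Proof.
case: i => [|i] le_in; first exact: hU.2.1.
by rewrite (hU.2.2 i.+1 le_in).2; lia.
Qed.

Lemma uniq_U : uniq X.
Proof.
apply/(uniqP v1) => i j; rewrite !inE /= !ltnS => le_in le_jn eq_x.
have same_indeg : maxn 1 i = maxn 1 j by rewrite -indeg_U // eq_x indeg_U.
have neq_x01 : x 1 != x 0 by apply: tour_neq (arc_U _); rewrite size_U_gt0.
have [//|neq_ij] := eqVneq i j.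
have [] : i = 0 /\ j = 1 \/ i = 1 /\ j = 0 by lia.
all: by case=> ? ?; subst i j; rewrite eq_x eqxx in neq_x01.
Qed.

Lemma nth_U_eq i j : i <= n -> j <= n -> (x i == x j) = (i == j).
Proof. by move=> le_in le_jn; rewrite nth_uniq ?uniq_U. Qed.

Lemma mem_take_U m i : i <= n -> (x i \in take m X) = (i < m).
Proof. by move=> le_in; rewrite mem_take_nth_uniq ?uniq_U. Qed.

Lemma card_take_U m : m <= n.+1 -> #|[set u in take m X]| = m.
Proof. by move=> le_m; rewrite card_take_uniq ?uniq_U. Qed.

Lemma take_sub_in_nbhd j : j <= n ->
    (forall l, l < j.-1 ->
       [set u | E u (x l)] = x l.+1 |: [set u in take l.-1 X]) ->
  [set u in take j.-1 X] \subset [set u | E u (x j)].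
Proof.
move=> le_jn nbhd; apply/subsetP => u /[!inE] /[dup] /mem_take /(nthP v1) [l].
rewrite /= ltnS => le_ln <-; rewrite mem_take_U // => lt_lj.
apply: tour_total; first by rewrite nth_U_eq //; lia.
move/setP/(_ (x j)): (nbhd l lt_lj); rewrite !inE nth_U_eq ?mem_take_U //.
  by move=> ->; lia.
lia.
Qed.

Lemma in_nbhd_U i : i < n ->
  [set u | E u (x i)] = x i.+1 |: [set u in take i.-1 X].
Proof.
elim/ltn_ind: i => i IH lt_in; apply: in_nbhd_eq_subset.
  rewrite subUset sub1set inE arc_U /=; last lia.
  by apply: take_sub_in_nbhd => [|l lt_l]; [lia | apply: IH; lia].
rewrite cardsU1 inE mem_take_U ?card_take_U ?indeg_U //; lia.
Qed.

Lemma in_nbhd_last : exists2 w, w \notin X &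
  [set u | E u (x n)] = w |: [set u in take n.-1 X].
Proof.
have n_gt0 := size_U_gt0.
have sub : [set u in take n.-1 X] \subset [set u | E u (x n)].
  by apply: take_sub_in_nbhd => // l lt_l; apply: in_nbhd_U; lia.
have : ~~ ([set u | E u (x n)] \subset [set u in take n.-1 X]).
  by apply/negP => /subset_leq_card; rewrite -/(indeg E _) card_take_U ?indeg_U //; lia.
case/subsetPn => w /[!inE] Ewx w_notin_take; exists w.
  apply/negP => /(nthP v1) [l]; rewrite /= ltnS => le_ln eq_w.
  move: w_notin_take Ewx; rewrite -eq_w mem_take_U // => le_l.
  have [->|->] : l = n \/ l = n.-1 by lia.
    by rewrite (negbTE (tour_irr _)).
  by apply/negP/tour_asym/arc_U; lia.
apply: in_nbhd_eq_subset; first by rewrite subUset sub1set inE Ewx sub.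
by rewrite cardsU1 inE w_notin_take card_take_U ?indeg_U //; lia.
Qed.

Lemma exists_outer_in_nbhd_last : exists2 w, w \notin X & E w (x n).
Proof.
have [w w_notin nbhd] := in_nbhd_last; exists w => //.
by move/setP/(_ w): nbhd; rewrite !inE eqxx.
Qed.

Section OuterInNeighbour.
Variable w : V.
Hypotheses (w_notin : w \notin X) (Ewx : E w (x n)).

Local Notation X' := (rcons X w).
Local Notation y i := (nth v1 X' i).

Lemma in_nbhd_last_outer :
  [set u | E u (x n)] = w |: [set u in take n.-1 X].
Proof.
have [w0 _ nbhd] := in_nbhd_last; rewrite nbhd.
suff -> : w = w0 by [].
move/setP/(_ w): nbhd; rewrite !inE Ewx => /esym/predU1P[//|/mem_take].
by rewrite (negbTE w_notin).
Qed.

Lemma outer_in_nbhd_last_unique u : u \notin X -> E u (x n) -> u = w.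
Proof.
move=> u_notin Eux; move/setP/(_ u): in_nbhd_last_outer; rewrite !inE Eux.
by case/esym/predU1P => // /mem_take; rewrite (negbTE u_notin).
Qed.

Lemma uniq_ext : uniq X'. Proof. by rewrite rcons_uniq w_notin uniq_U. Qed.

Lemma size_ext : size X' = n.+2. Proof. by rewrite size_rcons. Qed.

Lemma nth_ext i : i <= n -> y i = x i.
Proof. by move=> le_in; rewrite nth_rcons /= ltnS le_in. Qed.

Lemma nth_ext_last : y n.+1 = w.
Proof. by rewrite nth_rcons /= ltnn eqxx. Qed.

Lemma nth_ext_eq i j : i <= n.+1 -> j <= n.+1 -> (y i == y j) = (i == j).
Proof. by move=> le_i le_j; rewrite nth_uniq ?uniq_ext ?size_ext. Qed.

Lemma mem_take_ext m i : i <= n.+1 -> (y i \in take m X') = (i < m).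
Proof. by move=> le_i; rewrite mem_take_nth_uniq ?uniq_ext ?size_ext. Qed.

Lemma in_nbhd_ext j : j <= n ->
  [set u | E u (y j)] = y j.+1 |: [set u in take j.-1 X'].
Proof.
move=> le_jn; have -> : take j.-1 X' = take j.-1 X.
  by rewrite -cats1 takel_cat //=; lia.
have [lt_jn|->] : j < n \/ j = n by lia.
  by rewrite !nth_ext //; apply: in_nbhd_U.
by rewrite nth_ext // nth_ext_last in_nbhd_last_outer.
Qed.

Lemma arc_ext i j : i <= n.+1 -> j <= n.+1 ->
  E (y i) (y j) = (i == j.+1) || (i.+1 < j).
Proof.
move=> le_i le_j; have [le_jn|->] : j <= n \/ j = n.+1 by lia.
  move/setP/(_ (y i)): (in_nbhd_ext le_jn).
  by rewrite !inE nth_ext_eq ?mem_take_ext // => ->; lia.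
have [le_in|->] : i <= n \/ i = n.+1 by lia.
  rewrite (hT.2 (y i) (y n.+1)); last by rewrite nth_ext_eq //; lia.
  move/setP/(_ (y n.+1)): (in_nbhd_ext le_in).
  by rewrite !inE nth_ext_eq ?mem_take_ext // => ->; lia.
by rewrite (negbTE (tour_irr _)); lia.
Qed.

Lemma isUtour_ext : isUtour E [set u in X'].
Proof.
exists X', v1; split; first exact: uniq_ext.
by split=> // i j; rewrite size_ext !ltnS; apply: arc_ext.
Qed.

Lemma arc_to_outer i : i < n -> E (x i) w.
Proof.
move=> lt_in; have := arc_ext (i := i) (j := n.+1).
rewrite nth_ext_last nth_ext; last lia.
by move=> ->; lia.
Qed.

Lemma arc_ext_out i z : i <= n -> z \notin X' -> E (y i) z.
Proof.
move=> le_in z_notin; apply: tour_total.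
  by apply: contraNneq z_notin => <-; apply: mem_nth; rewrite size_ext; lia.
move/setP/(_ z): (in_nbhd_ext le_in); rewrite !inE => ->.
apply: contra z_notin => /predU1P[->|/mem_take //].
by apply: mem_nth; rewrite size_ext; lia.
Qed.

Lemma take_sub_in_nbhd_outer : [set u in take n X'] \subset [set u | E u w].
Proof.
apply/subsetP => u /[!inE] /[dup] /mem_take /(nthP v1) [i].
rewrite size_ext ltnS => le_i <-; rewrite mem_take_ext // => lt_in.
by rewrite nth_ext ?arc_to_outer // ltnW.
Qed.

Lemma card_take_outer : #|[set u in take n X']| = n.
Proof. by rewrite card_take_uniq ?uniq_ext // size_ext; lia. Qed.

Lemma indeg_outer_ge : n <= indeg E w.
Proof.
by rewrite -{1}card_take_outer; apply: subset_leq_card take_sub_in_nbhd_outer.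
Qed.

Lemma dominates_ext : indeg E w = n -> dominates E [set u in X'].
Proof.
move=> indeg_w u z; rewrite !in_set => /(nthP v1) [i].
rewrite size_ext ltnS => le_i <- z_notin.
have [le_in|->] : i <= n \/ i = n.+1 by lia.
  exact: arc_ext_out.
rewrite nth_ext_last; apply: tour_total.
  by apply: contraNneq z_notin => ->; rewrite mem_rcons mem_head.
have := in_nbhd_eq_subset take_sub_in_nbhd_outer.
rewrite indeg_w card_take_outer => /(_ (leqnn n)) /setP /(_ z).
by rewrite !in_set => ->; apply: contra z_notin => /mem_take.
Qed.

Lemma quasi_dom_U : n.+1 < indeg E w -> quasi_dom_ba E [set u in X] w (x n).
Proof.
move=> lt_indeg; have n_gt0 := size_U_gt0.
split=> //; split; first by rewrite in_set mem_nth.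
split; first by rewrite in_set.
split.
  move=> u v; rewrite !in_set => /(nthP v1) [i]; rewrite /= ltnS => le_in <-.
  move=> v_notin; have [-> neq_uv|neq_vw _] := eqVneq v w.
    have neq_in : i != n by move: neq_uv; apply: contraNneq => ->.
    by apply: arc_to_outer; lia.
  rewrite -nth_ext //; apply: arc_ext_out => //.
  by rewrite mem_rcons in_cons negb_or neq_vw.
split; first by move/card_uniqP: uniq_U; rewrite cardsE /= => ->; lia.
by exists (x n.-1); split; [rewrite in_set mem_nth //=; lia | apply: arc_U; lia].
Qed.

Lemma Uprop_ext : indeg E w = n.+1 -> Uprop E v1 (rcons vs w).
Proof.
move=> indeg_w.
split; first by rewrite /= size_rcons.
split=> [|j]; first exact: hU.2.1.
rewrite -[v1 :: rcons vs w]/X' size_ext => /andP[j_gt0 le_j].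
have [le_jn|->] : j <= n \/ j = n.+1 by lia.
  by rewrite !nth_ext //; [apply: (hU.2.2 j); rewrite /= j_gt0 | lia].
by rewrite nth_ext_last nth_ext.
Qed.

End OuterInNeighbour.

Lemma isUtour_U : isUtour E [set u in X].
Proof.
have [w w_notin Ewx] := exists_outer_in_nbhd_last.
exists X, v1; split; first exact: uniq_U.
split=> // i j; rewrite /= !ltnS => le_in le_jn.
by rewrite -!(nth_ext w) // arc_ext //; lia.
Qed.

End UList.

Lemma Uprop_sub_dominating_Utour v1 vs : Uprop E v1 vs ->
  exists Y : {set V}, [set u in v1 :: vs] \subset Y /\ isUtour E Y /\
    (dominates E Y \/ quasi_dom E Y).
Proof.
have [m] := ubnP (#|V| - size vs); elim: m vs => // m IH vs lt_m hU.
have [w w_notin Ewx] := exists_outer_in_nbhd_last hU.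
have sub_ext : [set u in v1 :: vs] \subset [set u in rcons (v1 :: vs) w].
  by apply/subsetP => u; rewrite !in_set mem_rcons in_cons => ->; rewrite orbT.
have := indeg_outer_ge hU w_notin Ewx; rewrite leq_eqVlt => /orP[/eqP/esym indeg_w|].
  exists [set u in rcons (v1 :: vs) w]; split=> //.
  by split; [apply: isUtour_ext | left; apply: dominates_ext].
rewrite leq_eqVlt => /orP[/eqP/esym indeg_w|lt_indeg]; last first.
  exists [set u in v1 :: vs]; split=> //; split; first exact: isUtour_U.
  by right; exists w, (nth v1 (v1 :: vs) (size vs)); apply: quasi_dom_U.
have size_le : (size vs).+2 <= #|V|.
  have := max_card (mem (rcons (v1 :: vs) w)).
  by move/card_uniqP: (uniq_ext hU w_notin) => ->; rewrite size_rcons.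
have [|Y [sub_Y Y_dom]] := IH (rcons vs w) _ (Uprop_ext hU w_notin Ewx indeg_w).
  by rewrite size_rcons; lia.
by exists Y; split=> //; apply: subset_trans sub_ext sub_Y.
Qed.

End Tournament.

Unset Implicit Arguments.
Theorem mainTheorem18 (V : finType) (E : rel V) (hT : tournament E)
    (v1 : V) (vs : seq V) (hU : Uprop E v1 vs) :
  let X := v1 :: vs in
  let vk := last v1 vs in
  (exists w, w \notin X /\ E w vk /\
     (forall w', w' \notin X -> E w' vk -> w' = w)) /\
  (forall w, w \notin X -> E w vk ->
     let X' := rcons X w in
     (indeg E w = indeg E vk ->
        isUtour E [set x in X'] /\ dominates E [set x in X']) /\
     (indeg E w = (indeg E vk).+1 ->
        exists Y : {set V}, [set x in X'] \subset Y /\ isUtour E Y /\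
          (dominates E Y \/ quasi_dom E Y)) /\
     ((indeg E vk).+1 < indeg E w ->
        isUtour E [set x in X] /\ quasi_dom_ba E [set x in X] w vk)) /\
  (exists Y : {set V}, [set x in X] \subset Y /\ isUtour E Y /\
     (dominates E Y \/ quasi_dom E Y)).
Proof.
have last_U : last v1 vs = nth v1 (v1 :: vs) (size vs) := esym (nth_last v1 (v1 :: vs)).
cbv zeta; rewrite last_U indeg_U // (maxn_idPr (size_U_gt0 hU)).
split.
  have [w w_notin Ewx] := exists_outer_in_nbhd_last hT hU.
  by exists w; split=> //; split=> // w'; apply: outer_in_nbhd_last_unique.
split; last exact: Uprop_sub_dominating_Utour.
move=> w w_notin Ewx; split.
  by move=> indeg_w; split; [apply: isUtour_ext | apply: dominates_ext].
split; last by move=> lt_indeg; split; [apply: isUtour_U | apply: quasi_dom_U].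
by move=> indeg_w; apply/(Uprop_sub_dominating_Utour hT)/Uprop_ext.
Qed.
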